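(* Let $(M_t)_{t\ge0}$ and $(N_t)_{t\ge0}$ be two $d$-dimensional processes with independent increments defined respectively on sublinear expectation spaces $(\Omega_1,\mathcal{H}_1,\hat{\mathbb{E}}_1)$ and $(\Omega_2,\mathcal{H}_2,\hat{\mathbb{E}}_2)$. Let $(X^i_t,Y^i_t)_{t\in[0,1]}$, $i\ge0$, be a sequence of $2d$-dimensional processes with independent increments defined respectively on sublinear expectation spaces $(\bar\Omega_i,\bar{\mathcal{H}}_i,\bar{\mathbb{E}}_i)$ such that $(X^i_t)_{t\in[0,1]}\overset{d}{=}(M_{i+t}-M_i)_{t\in[0,1]}$ and $(Y^i_t)_{t\in[0,1]}\overset{d}{=}(N_{i+t}-N_i)_{t\in[0,1]}$. Then there exists a $2d$-dimensional process $(\tilde M_t,\tilde N_t)_{t\ge0}$ with independent increments defined on a sublinear expectation space $(\Omega,\mathcal{H},\hat{\mathbb{E}})$ such that $(\tilde M_t)_{t\ge0}\overset{d}{=}(M_t)_{t\ge0}$ and $(\tilde N_t)_{t\ge0}\overset{d}{=}(N_t)_{t\ge0}$.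
   Context: $C_{b.Lip}(\mathbb{R}^d)$ is the set of bounded Lipschitz functions on $\mathbb{R}^d$. A sublinear expectation space $(\Omega,\mathcal{H},\hat{\mathbb{E}})$: $\mathcal{H}$ is a linear space of real functions on $\Omega$ closed under $(X_1,\dots,X_d)\mapsto\varphi(X_1,\dots,X_d)$ for $\varphi\in C_{b.Lip}(\mathbb{R}^d)$, and $\hat{\mathbb{E}}:\mathcal{H}\to\mathbb{R}$ is monotone, constant preserving, subadditive and positively homogeneous. $Y$ ($d$-dim) is independent from $X$ ($m$-dim) under $\hat{\mathbb{E}}$ if $\hat{\mathbb{E}}[\varphi(X,Y)]=\hat{\mathbb{E}}[\hat{\mathbb{E}}[\varphi(x,Y)]_{x=X}]$ for all $\varphi\in C_{b.Lip}(\mathbb{R}^{m+d})$. A process $(X_t)_{t\in T}$ ($T=[0,\infty)$ or $[0,1]$) with $X_0=0$ has independent increments if for all $t_1<\dots<t_n$ in $T$, $X_{t_n}-X_{t_{n-1}}$ is independent from $(X_{t_1},\dots,X_{t_{n-1}})$. Random vectors (on possibly different spaces) are identically distributed ($\overset{d}{=}$) if their expectations of $\varphi(\cdot)$ agree for every $\varphi\in C_{b.Lip}$; processes are identically distributed if all finite-dimensional vectors $(X_{t_1},\dots,X_{t_n})$ are. *)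

From Stdlib Require Import Reals.
From mathcomp Require Import all_boot.
Set Implicit Arguments. Unset Strict Implicit. Unset Printing Implicit Defensive.

Local Open Scope R_scope.

(* Bounded Lipschitz functions on R^I (I a finite index type; R^d = 'I_d -> R).
   Lipschitz w.r.t. the max-norm (all norms on R^d are equivalent). *)
Definition cblip (I : finType) (phi : (I -> R) -> R) : Prop :=
  (exists B : R, forall x, Rabs (phi x) <= B) /\
  (exists L : R, forall (x y : I -> R) (delta : R),
      (forall i, Rabs (x i - y i) <= delta) -> Rabs (phi x - phi y) <= L * delta).

(* Sublinear expectation space (Omega, H, E). E is total but its axioms
   only concern elements of H. *)
Record SLE := {
  Omega : Type;
  Hsp : (Omega -> R) -> Prop;
  Ex : (Omega -> R) -> R;
  Hsp_add : forall X Y, Hsp X -> Hsp Y -> Hsp (fun w => X w + Y w);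
  Hsp_scal : forall (c : R) X, Hsp X -> Hsp (fun w => c * X w);
  Hsp_lip : forall (n : nat) (X : 'I_n -> Omega -> R) (phi : ('I_n -> R) -> R),
      (forall i, Hsp (X i)) -> cblip phi -> Hsp (fun w => phi (fun i => X i w));
  Ex_mono : forall X Y, Hsp X -> Hsp Y -> (forall w, X w <= Y w) -> Ex X <= Ex Y;
  Ex_const : forall c : R, Ex (fun _ => c) = c;
  Ex_subadd : forall X Y, Hsp X -> Hsp Y ->
      Ex (fun w => X w + Y w) <= Ex X + Ex Y;
  Ex_poshom : forall (l : R) X, Hsp X -> 0 <= l -> Ex (fun w => l * X w) = l * Ex X
}.

Arguments Omega : clear implicits.
Arguments Hsp : clear implicits.
Arguments Ex : clear implicits.

Definition vcat (I J : finType) (x : I -> R) (y : J -> R) : (I + J)%type -> R :=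
  fun k => match k with inl i => x i | inr j => y j end.

(* Y (J-dim) is independent from X (I-dim) under E *)
Definition indep (S : SLE) (I J : finType)
    (X : I -> Omega S -> R) (Y : J -> Omega S -> R) : Prop :=
  forall phi : ((I + J)%type -> R) -> R, cblip phi ->
    Ex S (fun w => phi (vcat (fun i => X i w) (fun j => Y j w))) =
    Ex S (fun w => (fun x : I -> R => Ex S (fun w' => phi (vcat x (fun j => Y j w'))))
                     (fun i => X i w)).

Definition ident_vec (S1 S2 : SLE) (I : finType)
    (X : I -> Omega S1 -> R) (Y : I -> Omega S2 -> R) : Prop :=
  forall phi : (I -> R) -> R, cblip phi ->
    Ex S1 (fun w => phi (fun i => X i w)) = Ex S2 (fun w => phi (fun i => Y i w)).

Definition Tpos (t : R) : Prop := 0 <= t.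
Definition Tunit (t : R) : Prop := 0 <= t <= 1.

(* a D-dimensional process indexed by the time set T (functions of t outside T are irrelevant) *)
Definition process (S : SLE) (D : finType) := R -> D -> Omega S -> R.

Definition is_process (T : R -> Prop) (S : SLE) (D : finType) (X : process S D) : Prop :=
  forall t, T t -> forall i, Hsp S (X t i).

Definition fdvec (S : SLE) (D : finType) (X : process S D) (n : nat) (t : 'I_n -> R)
  : ('I_n * D)%type -> Omega S -> R :=
  fun p w => X (t p.1) p.2 w.

Definition indep_incr (T : R -> Prop) (S : SLE) (D : finType) (X : process S D) : Prop :=
  is_process T X /\
  (forall i w, X 0 i w = 0) /\
  (forall (k : nat) (s : 'I_k.+1 -> R) (v : R),
     (forall i : 'I_k.+1, T (s i)) -> T v ->
     (forall i j : 'I_k.+1, (i < j)%N -> s i < s j) ->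
     s ord_max < v ->
     indep (fdvec X s) (fun i w => X v i w - X (s ord_max) i w)).

Definition ident_proc (T : R -> Prop) (S1 S2 : SLE) (D : finType)
    (X : process S1 D) (Y : process S2 D) : Prop :=
  forall (n : nat) (t : 'I_n -> R), (forall i, T (t i)) ->
    ident_vec (fdvec X t) (fdvec Y t).

Definition lpart (S : SLE) (d : nat) (Z : process S 'I_(d + d)) : process S 'I_d :=
  fun t i w => Z t (lshift d i) w.
Definition rpart (S : SLE) (d : nat) (Z : process S 'I_(d + d)) : process S 'I_d :=
  fun t i w => Z t (rshift d i) w.

Definition shift_incr (S : SLE) (D : finType) (M : process S D) (a : R) : process S D :=
  fun t i w => M (a + t) i w - M a i w.

From Stdlib Require Import Reals Lra Lia List Classical ClassicalEpsilon
  FunctionalExtensionality Eqdep_dec.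
From mathcomp Require Import all_boot zify.
Set Implicit Arguments. Unset Strict Implicit. Unset Printing Implicit Defensive.
Local Open Scope R_scope.

(* Place the pieces side by side.  On the product of the spaces of the pieces, where the
   expectation of a function of finitely many coordinates integrates them out one at a
   time, last coordinate first, let the i-th piece run on the time window [i, i + 1].  An
   increment over [u, v] of the glued process is a present increment of the piece
   containing u, which is independent of that piece's past, plus later pieces; since the
   later coordinates are integrated out first, the glued process has independent
   increments.  Within one window its increments have the laws of those of M (resp. N);
   independence of increments propagates this to all increments and then to all
   finite-dimensional laws. *)


(** * Bounded Lipschitz functions *)

Lemma Rabs_le_inv a b : Rabs a <= b -> - b <= a <= b.
Proof. move=> H; have := Rle_abs a; have := Rle_abs (- a); rewrite Rabs_Ropp; lra. Qed.

Definition lipschitz_with (I : Type) (g : (I -> R) -> R) (L : R) :=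
  forall x y delta, 0 <= delta -> (forall i, Rabs (x i - y i) <= delta) ->
    Rabs (g x - g y) <= L * delta.

Definition lipschitz (I : Type) (g : (I -> R) -> R) := exists L, lipschitz_with g L.

Lemma lipschitz_with_ext (I : Type) (g : (I -> R) -> R) L x y :
  lipschitz_with g L -> (forall i, x i = y i) -> g x = g y.
Proof.
move=> Hg Exy; have /Rabs_le_inv : Rabs (g x - g y) <= L * 0.
  by apply: Hg => [|i]; rewrite ?Exy ?Rminus_diag ?Rabs_R0; apply: Rle_refl.
rewrite Rmult_0_r; lra.
Qed.

Lemma lipschitz_proj (I : Type) (i : I) : lipschitz (fun z : I -> R => z i).
Proof. by exists 1 => x y d _ H; rewrite Rmult_1_l. Qed.

Lemma lipschitz_const (I : Type) (c : R) : lipschitz (fun _ : I -> R => c).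
Proof. by exists 0 => x y d _ _; rewrite Rminus_diag Rabs_R0 Rmult_0_l; apply: Rle_refl. Qed.

Lemma lipschitz_add (I : Type) (f g : (I -> R) -> R) :
  lipschitz f -> lipschitz g -> lipschitz (fun z => f z + g z).
Proof.
move=> [Lf Hf] [Lg Hg]; exists (Lf + Lg) => x y d Hd Hxy.
have -> : f x + g x - (f y + g y) = (f x - f y) + (g x - g y) by ring.
apply: Rle_trans (Rabs_triang _ _) _.
have := Hf x y d Hd Hxy; have := Hg x y d Hd Hxy; lra.
Qed.

Lemma lipschitz_sub (I : Type) (f g : (I -> R) -> R) :
  lipschitz f -> lipschitz g -> lipschitz (fun z => f z - g z).
Proof.
move=> Hf [Lg Hg]; apply: lipschitz_add => //; exists Lg => x y d Hd Hxy.
have -> : - g x - - g y = - (g x - g y) by ring.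
by rewrite Rabs_Ropp; apply: Hg.
Qed.

Lemma finite_upper_bound (J : finType) (f : J -> R) : exists B, forall j, f j <= B.
Proof.
suff [B HB] : exists B, forall j, j \in enum J -> f j <= B.
  by exists B => j; apply: HB; rewrite mem_enum.
elim: (enum J) => [|a s [B HB]]; first by exists 0.
exists (Rmax (f a) B) => j; rewrite inE => /orP [/eqP ->|/HB H].
- exact: Rmax_l.
- exact: Rle_trans H (Rmax_r _ _).
Qed.

Lemma lipschitz_comp (I J : finType) (phi : (J -> R) -> R) (g : J -> (I -> R) -> R) Lp :
  lipschitz_with phi Lp -> 0 <= Lp -> (forall j, lipschitz (g j)) ->
  lipschitz (fun x => phi (fun j => g j x)).
Proof.
move=> Hp HLp /fin_all_exists [Ls HLs].
have [B HB] := finite_upper_bound (fun j => Rmax (Ls j) 0).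
have HB0 : 0 <= Rmax B 0 by apply: Rmax_r.
exists (Lp * Rmax B 0) => x y d Hd Hxy.
rewrite Rmult_assoc; apply: Hp => [|j]; first exact: Rmult_le_pos.
apply: Rle_trans (HLs j x y d Hd Hxy) _; apply: Rmult_le_compat_r => //.
have := HB j; have := Rmax_l (Ls j) 0; have := Rmax_l B 0; lra.
Qed.

Lemma cblip_intro (I : finType) (g : (I -> R) -> R) :
  (exists B, forall x, Rabs (g x) <= B) -> lipschitz g -> cblip g.
Proof.
move=> Hb [L HL]; split => //.
(* For empty [I] the hypothesis of [cblip] also holds for negative [delta], which forces
   the constant [0]; [g] is then constant. *)
have [[i0 _]|Hempty] := classic (exists i : I, True).
- exists L => x y d Hd; apply: HL => //; exact: Rle_trans (Rabs_pos _) (Hd i0).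
- exists 0 => x y d _; have -> : g x = g y.
    by apply: (lipschitz_with_ext HL) => i; case: Hempty; exists i.
  by rewrite Rminus_diag Rabs_R0 Rmult_0_l; apply: Rle_refl.
Qed.

Lemma cblip_lipschitz (I : finType) (g : (I -> R) -> R) :
  cblip g -> exists L, 0 <= L /\ lipschitz_with g L.
Proof.
case=> _ [L HL]; exists (Rmax L 0); split => [|x y d Hd Hxy]; first exact: Rmax_r.
apply: Rle_trans (HL x y d Hxy) _; apply: Rmult_le_compat_r => //; exact: Rmax_l.
Qed.

Lemma cblip_ext (I : finType) (g : (I -> R) -> R) x y :
  cblip g -> (forall i, x i = y i) -> g x = g y.
Proof. by move=> /cblip_lipschitz [L [_ HL]]; apply: (lipschitz_with_ext HL). Qed.

Lemma cblip_comp (I J : finType) (phi : (J -> R) -> R) (G : (I -> R) -> J -> R) :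
  cblip phi -> (forall j, lipschitz (fun z => G z j)) -> cblip (fun z => phi (G z)).
Proof.
move=> Hphi HG; apply: cblip_intro.
- by case: Hphi => [[B HB] _]; exists B.
- have [L [HL0 HL]] := cblip_lipschitz Hphi.
  exact: (lipschitz_comp (g := fun j z => G z j) HL HL0 HG).
Qed.

Lemma cblip_const (I : finType) (c : R) : cblip (fun _ : I -> R => c).
Proof.
by apply: cblip_intro; [exists (Rabs c) => _; apply: Rle_refl | apply: lipschitz_const].
Qed.

Lemma cblip_add (I : finType) (g h : (I -> R) -> R) :
  cblip g -> cblip h -> cblip (fun x => g x + h x).
Proof.
move=> Hg Hh; case: (Hg) => [[Bg HBg] _]; case: (Hh) => [[Bh HBh] _].
apply: cblip_intro.
- exists (Bg + Bh) => x; apply: Rle_trans (Rabs_triang _ _) _.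
  by have := HBg x; have := HBh x; lra.
- have [Lg [_ HLg]] := cblip_lipschitz Hg; have [Lh [_ HLh]] := cblip_lipschitz Hh.
  by apply: lipschitz_add; [exists Lg | exists Lh].
Qed.

Lemma cblip_scal (I : finType) (c : R) (g : (I -> R) -> R) :
  cblip g -> cblip (fun x => c * g x).
Proof.
move=> Hg; case: (Hg) => [[B HB] _]; have [L [_ HL]] := cblip_lipschitz Hg.
apply: cblip_intro.
- exists (Rabs c * B) => x; rewrite Rabs_mult.
  exact: Rmult_le_compat_l (Rabs_pos _) (HB x).
- exists (Rabs c * L) => x y d Hd Hxy; rewrite -Rmult_minus_distr_l Rabs_mult Rmult_assoc.
  exact: Rmult_le_compat_l (Rabs_pos _) (HL x y d Hd Hxy).
Qed.

Lemma cblip_precomp (I J : finType) (m : J -> I) (g : (J -> R) -> R) :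
  cblip g -> cblip (fun x : I -> R => g (fun j => x (m j))).
Proof. by move=> Hg; apply: cblip_comp => // j; apply: lipschitz_proj. Qed.

Lemma cblip_vcat_r (I J : finType) (psi : ((I + J)%type -> R) -> R) (x : I -> R) :
  cblip psi -> cblip (fun y : J -> R => psi (vcat x y)).
Proof.
by move=> H; apply: cblip_comp => // [[i|j]]; [apply: lipschitz_const | apply: lipschitz_proj].
Qed.

(** * Sublinear expectations *)

Section SublinearExpectation.
Variable S : SLE.

Lemma Hsp_ext (X Y : Omega S -> R) : Hsp S X -> (forall w, X w = Y w) -> Hsp S Y.
Proof. by move=> H /functional_extensionality <-. Qed.

Lemma Ex_ext (X Y : Omega S -> R) : (forall w, X w = Y w) -> Ex S X = Ex S Y.
Proof. by move=> /functional_extensionality ->. Qed.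

Lemma Hsp_const (c : R) : Hsp S (fun _ => c).
Proof.
apply: (@Hsp_lip S 0 (fun _ _ => 0) (fun _ => c)); last exact: cblip_const.
by case.
Qed.

Lemma Hsp_comp (I : finType) (Z : I -> Omega S -> R) (phi : (I -> R) -> R) :
  (forall p, Hsp S (Z p)) -> cblip phi -> Hsp S (fun w => phi (fun p => Z p w)).
Proof.
move=> HZ Hphi.
apply: Hsp_ext (@Hsp_lip S #|I| (fun i => Z (enum_val i))
                  (fun y => phi (fun p => y (enum_rank p))) _ _) _.
- by move=> i; apply: HZ.
- exact: cblip_precomp.
- by move=> w /=; apply: cblip_ext => // p; rewrite enum_rankK.
Qed.

Lemma Hsp_sub X Y : Hsp S X -> Hsp S Y -> Hsp S (fun w => X w - Y w).
Proof.
move=> HX HY; apply: Hsp_add => //.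
by apply: Hsp_ext (Hsp_scal (-1) HY) _ => w; ring.
Qed.

Lemma Ex_sub_le X Y : Hsp S X -> Hsp S Y -> Ex S X - Ex S Y <= Ex S (fun w => X w - Y w).
Proof.
move=> HX HY; have := Ex_subadd HY (Hsp_sub HX HY).
by rewrite (Ex_ext (X := fun w => Y w + (X w - Y w)) (Y := X)) => [|w]; [lra | ring].
Qed.

Lemma Ex_le_const X c : Hsp S X -> (forall w, X w <= c) -> Ex S X <= c.
Proof. by move=> HX H; rewrite -(Ex_const S c); apply: Ex_mono => //; apply: Hsp_const. Qed.

Lemma Ex_ge_const X c : Hsp S X -> (forall w, c <= X w) -> c <= Ex S X.
Proof. by move=> HX H; rewrite -(Ex_const S c); apply: Ex_mono => //; apply: Hsp_const. Qed.

Lemma Ex_dist_le X Y c : Hsp S X -> Hsp S Y -> (forall w, Rabs (X w - Y w) <= c) ->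
  Rabs (Ex S X - Ex S Y) <= c.
Proof.
move=> HX HY H; apply: Rabs_le.
have h1 : Ex S (fun w => X w - Y w) <= c.
  by apply: Ex_le_const => [|w]; [apply: Hsp_sub | have := Rabs_le_inv (H w); lra].
have h2 : Ex S (fun w => Y w - X w) <= c.
  by apply: Ex_le_const => [|w]; [apply: Hsp_sub | have := Rabs_le_inv (H w); lra].
have := Ex_sub_le HX HY; have := Ex_sub_le HY HX; lra.
Qed.

Lemma Ex_add_const (c : R) X : Hsp S X -> Ex S (fun w => c + X w) = c + Ex S X.
Proof.
move=> HX; have HcX : Hsp S (fun w => c + X w) by apply: Hsp_add => //; apply: Hsp_const.
apply: Rle_antisym.
- by have := Ex_subadd (Hsp_const c) HX; rewrite Ex_const.
- have := Ex_subadd HcX (Hsp_const (- c)); rewrite Ex_const.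
  by rewrite (Ex_ext (X := fun w => c + X w + - c) (Y := X)) => [|w]; [lra | ring].
Qed.

Lemma cblip_Ex_param (I : finType) (F : (I -> R) -> Omega S -> R) :
  (forall a, Hsp S (F a)) -> (exists B, forall a w, Rabs (F a w) <= B) ->
  (exists L, forall a a' d, 0 <= d -> (forall i, Rabs (a i - a' i) <= d) ->
      forall w, Rabs (F a w - F a' w) <= L * d) ->
  cblip (fun a => Ex S (F a)).
Proof.
move=> HF [B HB] [L HL]; apply: cblip_intro.
- exists B => a; apply: Rabs_le; split.
  + by apply: Ex_ge_const => // w; have := Rabs_le_inv (HB a w); lra.
  + by apply: Ex_le_const => // w; have := Rabs_le_inv (HB a w); lra.
- by exists L => a a' d Hd Had; apply: Ex_dist_le => //; apply: HL.
Qed.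

Lemma cblip_Ex_vcat (I J : finType) (psi : ((I + J)%type -> R) -> R) (Y : J -> Omega S -> R) :
  cblip psi -> (forall j, Hsp S (Y j)) ->
  cblip (fun a : I -> R => Ex S (fun w => psi (vcat a (fun j => Y j w)))).
Proof.
move=> Hpsi HY; apply: cblip_Ex_param.
- move=> a; apply: (Hsp_comp (Z := fun q w => vcat a (fun j => Y j w) q)) => // [[i|j]] /=.
  + exact: Hsp_const.
  + exact: HY.
- by case: Hpsi => [[B HB] _]; exists B.
- have [L [_ HL]] := cblip_lipschitz Hpsi.
  exists L => a a' d Hd Had w; apply: HL => // [[i|j]] /=; first exact: Had.
  by rewrite Rminus_diag Rabs_R0.
Qed.

Lemma Omega_inhabited : exists w : Omega S, True.
Proof.
apply: NNPP => Hempty.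
have E : (fun _ : Omega S => 0) = (fun _ => 1).
  by apply: functional_extensionality => w; case: Hempty; exists w.
have := Ex_const S 0; have := Ex_const S 1; rewrite E => ->; lra.
Qed.

End SublinearExpectation.

(** * Laws of processes with independent increments *)

Lemma indep_comp (S : SLE) (I J I' J' : finType) (X : I -> Omega S -> R) (Y : J -> Omega S -> R)
  (X' : I' -> Omega S -> R) (Y' : J' -> Omega S -> R)
  (g : I' -> (I -> R) -> R) (h : J' -> (J -> R) -> R) :
  indep X Y -> (forall i, lipschitz (g i)) -> (forall j, lipschitz (h j)) ->
  (forall i w, X' i w = g i (fun k => X k w)) -> (forall j w, Y' j w = h j (fun k => Y k w)) ->
  indep X' Y'.
Proof.
move=> HI Hg Hh EX EY phi Hphi.
pose G z := vcat (fun i => g i (fun k => z (inl k))) (fun j => h j (fun k => z (inr k))).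
have Hpsi : cblip (fun z => phi (G z)).
  apply: cblip_comp => // [[i|j]] /=.
  - by have [L HL] := Hg i; exists L => x y d Hd Hxy; apply: HL => // k; apply: Hxy.
  - by have [L HL] := Hh j; exists L => x y d Hd Hxy; apply: HL => // k; apply: Hxy.
have EG w w' : vcat (fun i => X' i w) (fun j => Y' j w') =
               G (vcat (fun i => X i w) (fun j => Y j w')).
  by apply: functional_extensionality => [[i|j]] /=; [apply: EX | apply: EY].
rewrite (Ex_ext (Y := fun w => phi (G (vcat (fun i => X i w) (fun j => Y j w))))) => [|w].
  by rewrite (HI _ Hpsi); apply: Ex_ext => w /=; apply: Ex_ext => w'; rewrite EG.
by rewrite EG.
Qed.

Lemma ident_vec_comp (S1 S2 : SLE) (I I' : finType)
  (X1 : I -> Omega S1 -> R) (X2 : I -> Omega S2 -> R)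
  (Y1 : I' -> Omega S1 -> R) (Y2 : I' -> Omega S2 -> R) (g : I' -> (I -> R) -> R) :
  ident_vec X1 X2 -> (forall i, lipschitz (g i)) ->
  (forall i w, Y1 i w = g i (fun k => X1 k w)) -> (forall i w, Y2 i w = g i (fun k => X2 k w)) ->
  ident_vec Y1 Y2.
Proof.
move=> HI Hg E1 E2 phi Hphi.
rewrite (Ex_ext (Y := fun w => phi (fun i => g i (fun k => X1 k w)))) => [|w].
  rewrite (HI _ (cblip_comp Hphi Hg)); apply: Ex_ext => w.
  by congr phi; apply: functional_extensionality => i; rewrite E2.
by congr phi; apply: functional_extensionality => i; apply: E1.
Qed.

Lemma ident_vec_zero (S1 S2 : SLE) (I : finType) (X1 : I -> Omega S1 -> R)
  (X2 : I -> Omega S2 -> R) :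
  (forall i w, X1 i w = 0) -> (forall i w, X2 i w = 0) -> ident_vec X1 X2.
Proof.
move=> H1 H2 phi _.
rewrite (Ex_ext (Y := fun _ => phi (fun _ => 0))) => [|w].
  rewrite [RHS](Ex_ext (Y := fun _ => phi (fun _ => 0))) => [|w]; first by rewrite !Ex_const.
  by congr phi; apply: functional_extensionality => i; apply: H2.
by congr phi; apply: functional_extensionality => i; apply: H1.
Qed.

Definition strictly_increasing k (s : 'I_k -> R) := forall i j : 'I_k, (i < j)%N -> s i < s j.

Lemma strictly_increasing_le k (s : 'I_k -> R) (i j : 'I_k) :
  strictly_increasing s -> (i <= j)%N -> s i <= s j.
Proof.
move=> Hs; rewrite leq_eqVlt => /orP [/eqP E|H]; last by left; apply: Hs.
have -> : i = j by apply: val_inj.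
exact: Rle_refl.
Qed.

Definition list_max (a : R) (l : list R) : R := fold_right Rmax a l.

Lemma list_max_ge a l x : In x (a :: l) -> x <= list_max a l.
Proof.
elim: l => [|b l IH] /=; first by case=> [->|[]]; apply: Rle_refl.
move=> Hx; have := Rmax_l b (list_max a l); have := Rmax_r b (list_max a l).
by case: Hx => [E|[E|H]]; [have := IH (or_introl E) | rewrite -E | have := IH (or_intror H)]; lra.
Qed.

Lemma list_max_in a l : In (list_max a l) (a :: l).
Proof.
elim: l => [|b l IH] /=; first by left.
rewrite /Rmax; case: Rle_dec => _; last by right; left.
by case: IH => [E|H]; [left | right; right].
Qed.

Definition below (m x : R) : bool := if Rlt_dec x m then true else false.

Lemma length_filter_below m l : In m l -> (length (List.filter (below m) l) < length l)%coq_nat.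
Proof.
have Hle f (l' : list R) : (length (List.filter f l') <= length l')%coq_nat.
  by elim: l' => [|a l' IH] /=; [lia | case: (f a) => /=; lia].
have Hm : below m m = false by rewrite /below; case: Rlt_dec => // H; lra.
elim: l => [//|a l IH] /= [->|H]; first by rewrite Hm; have := Hle (below m) l; lia.
by case: (below m a) => /=; have := IH H; lia.
Qed.

Lemma sort_list (l : list R) : exists k (s : 'I_k -> R),
  strictly_increasing s /\ (forall x, In x l -> exists j, x = s j) /\ (forall j, In (s j) l).
Proof.
move: {2}(length l) (le_n (length l)) => n; elim: n l => [|n IH] [|a0 l1] /= Hl; try lia;
  try by exists 0%N, (fun _ => 0); split; [case | split; [| case]].
set l := a0 :: l1; set m := list_max a0 l1.
have Hm : In m l by apply: list_max_in.
set l' := List.filter (below m) l.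
have Hl' : (length l' <= n)%coq_nat by have := length_filter_below Hm; rewrite -/l' /=; lia.
have [k [s' [Hs1 [Hs2 Hs3]]]] := IH l' Hl'.
have Hs'm j : s' j < m.
  by have := Hs3 j; rewrite /l' filter_In /below; case: Rlt_dec => [H|H] [_ E].
exists k.+1, (fun i : 'I_k.+1 => if insub (nat_of_ord i) is Some o then s' o else m).
split; [|split].
- move=> i j Hij; case: insubP => [o Ho Eo|Hno]; case: insubP => [o' Ho' Eo'|Hno'].
  + by apply: Hs1; rewrite Eo Eo'.
  + exact: Hs'm.
  + by exfalso; have := ltn_ord o'; move: Hno Hij; rewrite -Eo'; lia.
  + by exfalso; have := ltn_ord j; move: Hno Hno' Hij; lia.
- move=> x Hx; case: (Rlt_dec x m) => Hxm.
  + have [j ->] : exists j, x = s' j.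
      by apply: Hs2; rewrite /l' filter_In /below; case: Rlt_dec.
    exists (widen_ord (leqnSn k) j); case: insubP => [o _ Eo|]; last by rewrite /= ltn_ord.
    by congr (s' _); apply: val_inj.
  + exists ord_max; case: insubP => [o _ Eo|_] /=; last by have := list_max_ge Hx; rewrite -/m; lra.
    by move: (ltn_ord o); rewrite Eo ltnn.
- move=> j; case: insubP => [o _ _|_] //.
  by have := Hs3 o; rewrite /l' filter_In; case.
Qed.

Lemma sort_times n (t : 'I_n -> R) : exists k (s : 'I_k -> R) (f : 'I_n -> 'I_k),
  strictly_increasing s /\ (forall i, t i = s (f i)) /\ (forall j, exists i, s j = t i).
Proof.
have [k [s [Hs [Hin Hout]]]] := sort_list (List.map t (enum 'I_n)).
have [f Hf] : exists f : 'I_n -> 'I_k, forall i, t i = s (f i).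
  apply: (@fin_all_exists _ (fun _ => 'I_k) (fun i j => t i = s j)) => i; apply: Hin; apply: in_map.
  by elim: (enum 'I_n) (mem_enum 'I_n i) => //= a e IHe; rewrite inE => /orP [/eqP ->|/IHe]; auto.
exists k, s, f; split; [by [] | split => // j].
by have [i [E _]] := proj1 (in_map_iff _ _ _) (Hout j); exists i.
Qed.

Lemma ident_vec_vcat (S1 S2 : SLE) (I J : finType)
  (X1 : I -> Omega S1 -> R) (Y1 : J -> Omega S1 -> R)
  (X2 : I -> Omega S2 -> R) (Y2 : J -> Omega S2 -> R) :
  indep X1 Y1 -> indep X2 Y2 -> ident_vec X1 X2 -> ident_vec Y1 Y2 -> (forall j, Hsp S1 (Y1 j)) ->
  ident_vec (fun k w => vcat (fun i => X1 i w) (fun j => Y1 j w) k)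
            (fun k w => vcat (fun i => X2 i w) (fun j => Y2 j w) k).
Proof.
move=> HI1 HI2 HX HY HY1 phi Hphi.
have EF : forall x, Ex S1 (fun w => phi (vcat x (fun j => Y1 j w))) =
                    Ex S2 (fun w => phi (vcat x (fun j => Y2 j w))).
  by move=> x; apply: (HY (fun y => phi (vcat x y))); apply: cblip_vcat_r.
rewrite (Ex_ext (Y := fun w => phi (vcat (fun i => X1 i w) (fun j => Y1 j w)))) => [|w]; last first.
  by congr phi; apply: functional_extensionality => [[]].
rewrite [RHS](Ex_ext (Y := fun w => phi (vcat (fun i => X2 i w) (fun j => Y2 j w)))) => [|w];
  last by congr phi; apply: functional_extensionality => [[]].
rewrite (HI1 _ Hphi) (HI2 _ Hphi) (HX _ (cblip_Ex_vcat Hphi HY1)).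
by apply: Ex_ext => w; apply: EF.
Qed.

Definition incr (S : SLE) (D : finType) (X : process S D) (u v : R) : D -> Omega S -> R :=
  fun i w => X v i w - X u i w.

Lemma Hsp_incr (T : R -> Prop) (S : SLE) (D : finType) (X : process S D) u v :
  is_process T X -> T u -> T v -> forall i, Hsp S (incr X u v i).
Proof. by move=> HX Tu Tv i; apply: Hsp_sub; apply: HX. Qed.

Lemma indep_past_incr (T : R -> Prop) (S : SLE) (D : finType) (X : process S D)
  n (t : 'I_n -> R) u v :
  indep_incr T X -> (forall i, T (t i)) -> (forall i, t i <= u) -> T u -> T v -> u < v ->
  indep (fdvec X t) (incr X u v).
Proof.
move=> [_ [_ HI]] Ht Htu Tu Tv Huv.
pose t' (i : 'I_n.+1) := if insub (nat_of_ord i) is Some o then t o else u.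
have Ht'u : t' ord_max = u.
  by rewrite /t'; case: insubP => [o _ Eo|//]; move: (ltn_ord o); rewrite Eo ltnn.
have Ht't i : t' (widen_ord (leqnSn n) i) = t i.
  rewrite /t'; case: insubP => [o _ Eo|]; last by rewrite /= ltn_ord.
  by congr t; apply: val_inj.
have Ht'le i : t' i <= u by rewrite /t'; case: insubP => [o _ _|_]; [apply: Htu | apply: Rle_refl].
have [[|k] [s [f [Hs [Hf Hsurj]]]]] := sort_times t'; first by case: (f ord_max).
have Hsu : s ord_max = u.
  apply: Rle_antisym; first by have [i ->] := Hsurj ord_max; apply: Ht'le.
  by rewrite -Ht'u Hf; apply: (strictly_increasing_le Hs); rewrite -ltnS.
have Ts i : T (s i).
  by have [j ->] := Hsurj i; rewrite /t'; case: insubP => [o _ _|_].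
have := HI k s v Ts Tv Hs; rewrite Hsu => /(_ Huv) Hind.
apply: (indep_comp (g := fun p z => z (f (widen_ord (leqnSn n) p.1), p.2))
                   (h := fun i z => z i) Hind) => //.
- by move=> p; apply: (lipschitz_proj (f (widen_ord (leqnSn n) p.1), p.2)).
- by move=> i; apply: lipschitz_proj.
- by move=> [i q] w; rewrite /fdvec /= -Hf Ht't.
Qed.

Section IdenticalIncrements.
Variables (S1 S2 : SLE) (D : finType) (X1 : process S1 D) (X2 : process S2 D).
Hypotheses (HX1 : indep_incr Tpos X1) (HX2 : indep_incr Tpos X2).

Lemma ident_incr_concat u m v : 0 <= u -> u < m -> m < v ->
  ident_vec (incr X1 u m) (incr X2 u m) -> ident_vec (incr X1 m v) (incr X2 m v) ->
  ident_vec (incr X1 u v) (incr X2 u v).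
Proof.
move=> Hu Hum Hmv I1 I2.
pose t (i : 'I_2) := if nat_of_ord i == 0%N then u else m.
have Ht i : Tpos (t i) by rewrite /t /Tpos; case: (_ == _); lra.
have Htm i : t i <= m by rewrite /t; case: (_ == _); lra.
have Hindep (S : SLE) (X : process S D) : indep_incr Tpos X -> indep (incr X u m) (incr X m v).
  move=> HX; apply: (indep_comp (g := fun i z => z (ord_max, i) - z (ord0, i)) (h := fun i z => z i)
                                (indep_past_incr HX Ht Htm _ _ Hmv)) => //; rewrite /Tpos; try lra.
  - by move=> i; apply: lipschitz_sub; apply: lipschitz_proj.
  - by move=> i; apply: lipschitz_proj.
have HY : forall i, Hsp S1 (incr X1 m v i).
  by apply: (Hsp_incr (T := Tpos)); [case: HX1 | rewrite /Tpos; lra ..].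
apply: (ident_vec_comp (g := fun i z => z (inl i) + z (inr i))
          (ident_vec_vcat (Hindep _ _ HX1) (Hindep _ _ HX2) I1 I2 HY)).
- by move=> i; apply: lipschitz_add; apply: lipschitz_proj.
- by move=> i w; rewrite /incr /=; ring.
- by move=> i w; rewrite /incr /=; ring.
Qed.

Lemma ident_incr_of_windows :
  (forall (j : nat) u v, INR j <= u -> u < v -> v <= INR j + 1 ->
     ident_vec (incr X1 u v) (incr X2 u v)) ->
  forall u v, 0 <= u -> u < v -> ident_vec (incr X1 u v) (incr X2 u v).
Proof.
move=> Hw.
suff Hn n : forall u v, 0 <= u -> u < v -> v <= INR n -> ident_vec (incr X1 u v) (incr X2 u v).
  by move=> u v Hu Huv; have [N HN] := INR_unbounded v; apply: (Hn N) => //; lra.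
elim: n => [|n IH] u v Hu Huv; first by rewrite /=; lra.
rewrite S_INR => Hv; case: (Rle_lt_dec v (INR n)) => Hvn; first exact: IH.
case: (Rle_lt_dec (INR n) u) => Hun; first by apply: (Hw n).
by apply: (ident_incr_concat Hu Hun Hvn); [apply: IH; lra | apply: (Hw n); lra].
Qed.

Lemma ident_fdvec_increasing :
  (forall u v, 0 <= u -> u < v -> ident_vec (incr X1 u v) (incr X2 u v)) ->
  forall k (s : 'I_k.+1 -> R), strictly_increasing s -> (forall i, 0 <= s i) ->
  ident_vec (fdvec X1 s) (fdvec X2 s).
Proof.
move=> Hinc; elim=> [|k IH] s Hs Hpos.
  have X0 (S : SLE) (X : process S D) : indep_incr Tpos X -> forall p w,
      fdvec X s p w = incr X 0 (s ord0) p.2 w.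
    by case=> [_ [H0 _]] [i q] w; rewrite /fdvec /incr (ord1 i) H0 /=; ring.
  have [H0|H0] := Rle_lt_or_eq_dec 0 (s ord0) (Hpos ord0).
  - apply: (ident_vec_comp (g := fun p z => z p.2) (Hinc 0 (s ord0) (Rle_refl 0) H0)).
    + by move=> p; apply: lipschitz_proj.
    + exact: X0.
    + exact: X0.
  - by apply: ident_vec_zero => p w; rewrite X0 // /incr -H0 Rminus_diag.
pose s' (i : 'I_k.+1) := s (widen_ord (leqnSn k.+1) i).
pose u := s' ord_max; pose v := s ord_max.
have Hs' : strictly_increasing s' by move=> i j Hij; apply: Hs.
have Hpos' i : 0 <= s' i by apply: Hpos.
have Huv : u < v by apply: Hs => /=.
have Hindep (S : SLE) (X : process S D) : indep_incr Tpos X -> indep (fdvec X s') (incr X u v).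
  by case=> [_ [_ H]]; apply: H => //; apply: Hpos.
have HY : forall i, Hsp S1 (incr X1 u v i).
  by apply: (Hsp_incr (T := Tpos)); [case: HX1 | apply: Hpos ..].
pose G (z : (('I_k.+1 * D) + D)%type -> R) (p : 'I_k.+2 * D) :=
  if insub (nat_of_ord p.1) is Some o then z (inl (o, p.2))
  else z (inl (ord_max, p.2)) + z (inr p.2).
have EG (S : SLE) (X : process S D) p w :
    fdvec X s p w = G (vcat (fun p => fdvec X s' p w) (fun q => incr X u v q w)) p.
  case: p => [i q]; rewrite /G /fdvec /=; case: insubP => [o _ Eo|Hno] /=.
  - by congr (X (s _) q w); apply: val_inj.
  - have -> : i = ord_max by apply: val_inj => /=; have := ltn_ord i; move: Hno; lia.
    by rewrite /incr /u /v; ring.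
apply: (ident_vec_comp (g := fun p z => G z p)
          (ident_vec_vcat (Hindep _ _ HX1) (Hindep _ _ HX2) (IH s' Hs' Hpos') (Hinc u v (Hpos' _) Huv) HY)).
- move=> p; rewrite /G; case: insub => [o|]; first exact: lipschitz_proj.
  by apply: lipschitz_add; apply: lipschitz_proj.
- exact: EG.
- exact: EG.
Qed.

Lemma ident_proc_of_incr :
  (forall u v, 0 <= u -> u < v -> ident_vec (incr X1 u v) (incr X2 u v)) ->
  ident_proc Tpos X1 X2.
Proof.
move=> Hinc n t Ht.
have [[|k] [s [f [Hs [Hf Hsurj]]]]] := sort_times t.
  by apply: ident_vec_zero => -[i q]; case: (f i).
have Hpos j : 0 <= s j by have [i ->] := Hsurj j; apply: Ht.
apply: (ident_vec_comp (g := fun p z => z (f p.1, p.2)) (ident_fdvec_increasing Hinc Hs Hpos)).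
- by move=> p; apply: (lipschitz_proj (f p.1, p.2)).
- by move=> [i q] w; rewrite /fdvec /= Hf.
- by move=> [i q] w; rewrite /fdvec /= Hf.
Qed.

End IdenticalIncrements.

(** * The product of a sequence of sublinear expectation spaces *)

Fixpoint sumR (f : nat -> R) (n : nat) : R :=
  match n with O => 0 | S n => sumR f n + f n end.

Lemma sumR_ext f g n : (forall j, (j < n)%N -> f j = g j) -> sumR f n = sumR g n.
Proof.
elim: n => [|n IH] H //=; rewrite IH ?H //; move=> j Hj; apply: H; exact: ltnW.
Qed.

Lemma sumR_add f g n : sumR (fun j => f j + g j) n = sumR f n + sumR g n.
Proof. elim: n => [|n IH] /=; [ring | rewrite IH; ring]. Qed.

Lemma sumR_scal c f n : sumR (fun j => c * f j) n = c * sumR f n.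
Proof. elim: n => [|n IH] /=; [ring | rewrite IH; ring]. Qed.

Lemma sumR_zero f n : (forall j, (j < n)%N -> f j = 0) -> sumR f n = 0.
Proof. move=> H; rewrite (sumR_ext (g := fun _ => 0)) //; elim: n {H} => //= n ->; ring. Qed.

Lemma sumR_split f m n : sumR f (m + n) = sumR f m + sumR (fun j => f (m + j)%N) n.
Proof. elim: n => [|n IH] /=; rewrite ?addn0 /=; [ring|]. rewrite addnS /= IH; ring. Qed.

Lemma sumR_delta (j : nat) a (g : nat -> R) n :
  sumR (fun k => if k == j then a else g k) n =
  sumR (fun k => if k == j then 0 else g k) n + (if (j < n)%N then a else 0).
Proof.
elim: n => [|n IH] /=; first ring.
rewrite IH; case: (eqVneq n j) => [->|Hn].
- rewrite ltnn ltnSn; ring.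
- have -> : (j < n.+1)%N = (j < n)%N by rewrite ltnS leq_eqVlt eq_sym (negbTE Hn).
  ring.
Qed.

Lemma sumR_lip f g n d : (forall j, (j < n)%N -> Rabs (f j - g j) <= d) ->
  Rabs (sumR f n - sumR g n) <= INR n * d.
Proof.
elim: n => [|n IH] H; first by rewrite /= Rminus_diag Rabs_R0 Rmult_0_l; apply: Rle_refl.
rewrite S_INR /=.
have h1 := IH (fun j Hj => H j (ltnW Hj)).
have h2 := H n (ltnSn n).
have -> : sumR f n + f n - (sumR g n + g n) = sumR f n - sumR g n + (f n - g n) by ring.
apply: Rle_trans (Rabs_triang (sumR f n - sumR g n) (f n - g n)) _.
lra.
Qed.

Lemma sumR_trunc (f : nat -> R) m n : (m <= n)%N ->
  sumR (fun k => if (k < m)%N then f k else 0) n = sumR f m.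
Proof.
move=> Hmn; rewrite -(subnKC Hmn) sumR_split.
rewrite (@sumR_ext (fun k => if (k < m)%N then f k else 0) f m); last by move=> j ->.
rewrite (@sumR_zero (fun j => if (m + j < m)%N then f (m + j)%N else 0)); first ring.
by move=> j _; rewrite ltnNge leq_addr.
Qed.

Lemma sumR_tail (f : nat -> R) K M : (K <= M)%N ->
  (forall j, (K <= j)%N -> (j < M)%N -> f j = 0) -> sumR f M = sumR f K.
Proof.
move=> HKM H; rewrite -(subnKC HKM) sumR_split (@sumR_zero (fun j => f (K + j)%N)) ?Rplus_0_r //.
by move=> j Hj; apply: H; lia.
Qed.

Section ProductCoordinates.
Variable Sb : nat -> SLE.

Definition prodOmega := forall i, Omega (Sb i).

Definition set_coord (om : prodOmega) (j : nat) (w : Omega (Sb j)) : prodOmega :=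
  fun i => match Nat.eq_dec j i with
           | left e => eq_rect j (fun k => Omega (Sb k)) w i e
           | right _ => om i
           end.
Arguments set_coord om j w i : clear implicits.

Lemma set_coord_eq om j w : set_coord om j w j = w.
Proof. by rewrite /set_coord; case: (Nat.eq_dec j j) => [e|//]; rewrite (UIP_refl_nat _ e). Qed.

Lemma set_coord_neq om j w i : j <> i -> set_coord om j w i = om i.
Proof. by rewrite /set_coord; case: (Nat.eq_dec j i). Qed.

Lemma set_coord_same om om' j w i : j = i -> set_coord om j w i = set_coord om' j w i.
Proof. by rewrite /set_coord; case: (Nat.eq_dec j i). Qed.

Definition depends_on (C : nat -> Prop) (X : prodOmega -> R) :=
  forall om om', (forall i, C i -> om i = om' i) -> X om = X om'.

Definition supported_below (K : nat) (X : prodOmega -> R) := depends_on (fun i => (i < K)%N) X.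

Lemma supported_below_le K K' X : (K <= K')%N -> supported_below K X -> supported_below K' X.
Proof. by move=> HK H om om' E; apply: H => i Hi; apply: E; apply: leq_trans HK. Qed.

Definition Ex_at (j : nat) (X : prodOmega -> R) : prodOmega -> R :=
  fun om => Ex (Sb j) (fun w => X (set_coord om j w)).

(* [Ex_range a n X] integrates out the coordinates [a], ..., [a + n - 1], the last one first. *)
Fixpoint Ex_range (a n : nat) (X : prodOmega -> R) : prodOmega -> R :=
  if n is n'.+1 then Ex_at a (Ex_range a.+1 n' X) else X.

Lemma Ex_at_depends C j X : depends_on C X -> depends_on (fun i => C i /\ i <> j) (Ex_at j X).
Proof.
move=> H om om' E; apply: Ex_ext => w; apply: H => i Ci.
case: (Nat.eq_dec j i) => [e|ne]; first exact: set_coord_same.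
by rewrite !set_coord_neq //; apply: E; split => // e; apply: ne.
Qed.

Lemma Ex_at_free j X : depends_on (fun i => i <> j) X -> forall om, Ex_at j X om = X om.
Proof.
move=> H om; rewrite /Ex_at (Ex_ext (Y := fun _ => X om)) ?Ex_const // => w.
by apply: H => i Hi; apply: set_coord_neq => e; apply: Hi.
Qed.

Lemma Ex_range_split a n m X : Ex_range a (n + m) X = Ex_range a n (Ex_range (a + n) m X).
Proof. by elim: n a => [|n IH] a /=; rewrite ?addn0 // IH addSnnS. Qed.

Lemma Ex_range_depends C a n X : depends_on C X ->
  depends_on (fun i => C i /\ ~ ((a <= i)%N /\ (i < a + n)%N)) (Ex_range a n X).
Proof.
elim: n a => [|n IH] a H /=.
  by move=> om om' E; apply: H => i Ci; apply: E; split => //; lia.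
move=> om om' E; apply: (Ex_at_depends (IH a.+1 H)) => i [[Ci Hi] Hia].
by apply: E; split => //; lia.
Qed.

Lemma Ex_range_free a n X : depends_on (fun i => ~ ((a <= i)%N /\ (i < a + n)%N)) X ->
  forall om, Ex_range a n X om = X om.
Proof.
elim: n a => [|n IH] a H om //=.
have -> : Ex_range a.+1 n X = X.
  by apply: functional_extensionality; apply: IH => om1 om2 E; apply: H => i Hi; apply: E; lia.
by apply: Ex_at_free => om1 om2 E; apply: H => i Hi; apply: E; lia.
Qed.

Lemma Ex_range_const a n (c : R) om : Ex_range a n (fun _ => c) om = c.
Proof. by rewrite Ex_range_free. Qed.

Lemma Ex_range_const_pt a n X : depends_on (fun i => (a <= i)%N /\ (i < a + n)%N) X ->
  forall om om', Ex_range a n X om = Ex_range a n X om'.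
Proof. by move=> H om om'; apply: (Ex_range_depends H) => i [Hi Hi']. Qed.

Lemma Ex_range_supported K m X : supported_below K X -> (K <= m)%N ->
  Ex_range 0 m X = Ex_range 0 K X.
Proof.
move=> H Hm; rewrite -(subnKC Hm) Ex_range_split add0n.
suff -> : Ex_range K (m - K) X = X by [].
by apply: functional_extensionality; apply: Ex_range_free => om om' E; apply: H => i Hi; apply: E; lia.
Qed.

Lemma Ex_range_freeze (A : Type) a n (f : A -> prodOmega -> R) (g : prodOmega -> A) :
  (forall om j w, (a <= j)%N -> (j < a + n)%N -> g (set_coord om j w) = g om) ->
  forall om0, Ex_range a n (fun om => f (g om) om) om0 = Ex_range a n (f (g om0)) om0.
Proof.
elim: n a => [|n IH] a Hg om0 //=; apply: Ex_ext => w.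
by rewrite IH => [|om j w' h1 h2]; [rewrite Hg //; lia | apply: Hg; lia].
Qed.

End ProductCoordinates.
Arguments set_coord {Sb} om j w i.
Arguments Ex_at {Sb} j X om.
Arguments Ex_range {Sb} a n X om.
Arguments depends_on {Sb} C X.
Arguments supported_below {Sb} K X.

Section CylinderFunctions.
Local Unset Implicit Arguments.
Variable Sb : nat -> SLE.
Variable b : prodOmega Sb.

(* The cylinder function
     [om |-> \sum_(j < cyl_n) cyl_lin j (om j) + cyl_fun (cyl_var p (om (cyl_coord p)))_p]
   is a sum of random variables of single coordinates plus a bounded Lipschitz function
   of finitely many of them; the sum is needed because elements of [Hsp] may be unbounded. *)
Record cyl := { cyl_n : nat; cyl_lin : forall j, Omega (Sb j) -> R; cyl_idx : finType;
  cyl_coord : cyl_idx -> nat; cyl_var : forall p, Omega (Sb (cyl_coord p)) -> R;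
  cyl_fun : (cyl_idx -> R) -> R }.
Arguments cyl_lin c j _ : clear implicits.
Arguments cyl_var c p _ : clear implicits.
Arguments cyl_coord c p : clear implicits.
Arguments cyl_fun c _ : clear implicits.

Definition cyl_wf (r : cyl) := [/\ forall j, Hsp (Sb j) (cyl_lin r j),
  forall p, Hsp (Sb (cyl_coord r p)) (cyl_var r p) & cblip (cyl_fun r)].

Definition cyl_vars (r : cyl) (om : prodOmega Sb) : cyl_idx r -> R :=
  fun p => cyl_var r p (om (cyl_coord r p)).

Definition cyl_eval (r : cyl) (om : prodOmega Sb) : R :=
  sumR (fun j => cyl_lin r j (om j)) (cyl_n r) + cyl_fun r (cyl_vars r om).

Definition cylindrical (X : prodOmega Sb -> R) := exists r, cyl_wf r /\ forall om, X om = cyl_eval r om.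

Lemma cylindrical_const (c : R) : cylindrical (fun _ => c).
Proof.
exists {| cyl_n := 0; cyl_lin := fun _ _ => 0; cyl_idx := void; cyl_coord := fun p => match p with end;
          cyl_var := fun p => match p with end; cyl_fun := fun _ => c |}.
split; last by move=> om; rewrite /cyl_eval /=; ring.
by split=> [j|[]|]; [apply: Hsp_const | apply: cblip_const].
Qed.

Lemma Hsp_set_coord om j k (f : Omega (Sb k) -> R) : j = k -> Hsp (Sb k) f ->
  Hsp (Sb j) (fun w => f (set_coord om j w k)).
Proof. by move=> e; subst k => H; apply: Hsp_ext H _ => w; rewrite set_coord_eq. Qed.

Lemma cylindrical_coord j (f : Omega (Sb j) -> R) : Hsp (Sb j) f -> cylindrical (fun om => f (om j)).
Proof.
move=> Hf.
exists {| cyl_n := j.+1; cyl_lin := fun k w => if k == j then f (set_coord b k w j) else 0;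
          cyl_idx := void; cyl_coord := fun p => match p with end;
          cyl_var := fun p => match p with end; cyl_fun := fun _ => 0 |}.
split.
  split=> [k|[]|]; last exact: cblip_const.
  by rewrite /=; case: (eqVneq k j) => [e|_]; [apply: (Hsp_set_coord b k j f e Hf) | apply: Hsp_const].
move=> om; rewrite /cyl_eval /= (sumR_ext (g := fun k => if k == j then f (om j) else 0)) => [|k _].
  rewrite sumR_delta sumR_zero => [|k _]; last by case: (k == j).
  by rewrite ltnn eqxx set_coord_eq; ring.
by case: (eqVneq k j) => [->|//]; rewrite set_coord_eq.
Qed.

Lemma cylindrical_add X Y : cylindrical X -> cylindrical Y -> cylindrical (fun om => X om + Y om).
Proof.
move=> [r1 [[Hz1 Hx1 HB1] E1]] [r2 [[Hz2 Hx2 HB2] E2]].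
pose c (p : (cyl_idx r1 + cyl_idx r2)%type) :=
  match p with inl p => cyl_coord r1 p | inr p => cyl_coord r2 p end.
pose lin k (r : cyl) (w : Omega (Sb k)) := if (k < cyl_n r)%N then cyl_lin r k w else 0.
exists {| cyl_n := cyl_n r1 + cyl_n r2; cyl_lin := fun k w => lin k r1 w + lin k r2 w;
          cyl_idx := (cyl_idx r1 + cyl_idx r2)%type; cyl_coord := c;
          cyl_var := fun p => match p as p0 return Omega (Sb (c p0)) -> R with
                              | inl p => cyl_var r1 p | inr p => cyl_var r2 p end;
          cyl_fun := fun x => cyl_fun r1 (fun p => x (inl p)) + cyl_fun r2 (fun p => x (inr p)) |}.
split.
  split=> [k||] /=; last by apply: cblip_add; apply: cblip_precomp.
  - by apply: Hsp_add; rewrite /lin; [case: (k < cyl_n r1)%N | case: (k < cyl_n r2)%N] => //;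
      apply: Hsp_const.
  - by case.
move=> om; rewrite E1 E2 /cyl_eval /= sumR_add.
rewrite (sumR_trunc (fun j => cyl_lin r1 j (om j))) ?leq_addr //.
by rewrite (sumR_trunc (fun j => cyl_lin r2 j (om j))) ?leq_addl //; rewrite /cyl_vars /=; ring.
Qed.

Lemma cylindrical_scal (l : R) X : cylindrical X -> cylindrical (fun om => l * X om).
Proof.
move=> [r [[Hz Hx HB] E]].
exists {| cyl_n := cyl_n r; cyl_lin := fun k w => l * cyl_lin r k w; cyl_idx := cyl_idx r;
          cyl_coord := cyl_coord r; cyl_var := cyl_var r; cyl_fun := fun x => l * cyl_fun r x |}.
split; first by split=> //= [k|]; [apply: Hsp_scal | apply: cblip_scal].
by move=> om; rewrite E /cyl_eval /= sumR_scal /cyl_vars /=; ring.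
Qed.

Definition cyl_flat (r : cyl) (x : (cyl_idx r + 'I_(cyl_n r))%type -> R) : R :=
  sumR (fun k => if insub k is Some o then x (inr o) else 0) (cyl_n r) + cyl_fun r (fun p => x (inl p)).

Lemma lipschitz_cyl_flat r : cyl_wf r -> lipschitz (cyl_flat r).
Proof.
move=> [_ _ HB]; have [L [_ HL]] := cblip_lipschitz HB.
apply: lipschitz_add; last by exists L => x y d Hd Hxy; apply: HL => // p; apply: Hxy.
exists (INR (cyl_n r)) => x y d Hd Hxy; apply: sumR_lip => k _.
by case: insubP => [o _ _|_]; [apply: Hxy | rewrite Rminus_diag Rabs_R0].
Qed.

Lemma cyl_eval_flat r om : cyl_eval r om =
  cyl_flat r (fun q => match q with inl p => cyl_vars r om p | inr o => cyl_lin r o (om o) end).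
Proof.
rewrite /cyl_eval /cyl_flat; congr (_ + _); apply: sumR_ext => k Hk.
by case: insubP => [o _ <-|]; rewrite ?Hk.
Qed.

Lemma cylindrical_comp n (X : 'I_n -> prodOmega Sb -> R) (Phi : ('I_n -> R) -> R) :
  (forall i, cylindrical (X i)) -> cblip Phi -> cylindrical (fun om => Phi (fun i => X i om)).
Proof.
move=> /fin_all_exists [r Hr] HPhi.
pose I := {i : 'I_n & (cyl_idx (r i) + 'I_(cyl_n (r i)))%type}.
pose c (q : I) := match q with
                  | existT i (inl p) => cyl_coord (r i) p
                  | existT i (inr o) => nat_of_ord o end.
pose xi (q : I) := match q as q0 return Omega (Sb (c q0)) -> R with
                   | existT i (inl p) => cyl_var (r i) p
                   | existT i (inr o) => cyl_lin (r i) o end.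
exists {| cyl_n := 0; cyl_lin := fun _ _ => 0; cyl_idx := I; cyl_coord := c; cyl_var := xi;
          cyl_fun := fun x => Phi (fun i => cyl_flat (r i) (fun q => x (existT _ i q))) |}.
split.
  split=> [k|[i [p|o]]|] /=; first exact: Hsp_const.
  - by case: (Hr i) => [[_ Hx _] _].
  - by case: (Hr i) => [[Hz _ _] _].
  apply: cblip_comp => // i; have [L HL] := lipschitz_cyl_flat (r i) (proj1 (Hr i)).
  by exists L => x y d Hd Hxy; apply: HL => // q; apply: Hxy.
move=> om; rewrite /cyl_eval /= Rplus_0_l; apply: cblip_ext => // i.
by rewrite (proj2 (Hr i)) cyl_eval_flat; congr (cyl_flat _ _); apply: functional_extensionality => -[].
Qed.

Lemma cylindrical_supported X : cylindrical X -> exists K, supported_below K X.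
Proof.
move=> [r [[Hz Hx HB] E]].
exists (maxn (cyl_n r) (\max_(p : cyl_idx r) cyl_coord r p).+1) => om om' Eo.
rewrite !E /cyl_eval; congr (_ + _).
  by apply: sumR_ext => k Hk; rewrite Eo //; apply: leq_trans Hk (leq_maxl _ _).
apply: cblip_ext => // p; rewrite /cyl_vars Eo //.
by apply: leq_trans (leq_maxr _ _); rewrite ltnS; apply: leq_bigmax.
Qed.

Definition cyl_lin_at (r : cyl) (j : nat) (w : Omega (Sb j)) : R :=
  if (j < cyl_n r)%N then cyl_lin r j w else 0.

Definition cyl_vars_set (r : cyl) (j : nat) (x : cyl_idx r -> R) (w : Omega (Sb j)) : cyl_idx r -> R :=
  fun p => if cyl_coord r p == j then cyl_var r p (set_coord b j w (cyl_coord r p)) else x p.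

Definition cyl_slice (r : cyl) (j : nat) (x : cyl_idx r -> R) (w : Omega (Sb j)) : R :=
  cyl_lin_at r j w + cyl_fun r (cyl_vars_set r j x w).

Definition cyl_lin_drop (r : cyl) (j : nat) : forall k, Omega (Sb k) -> R :=
  fun k => if k == j then (fun _ => 0) else cyl_lin r k.

Lemma cyl_eval_set_coord r j om w : cyl_wf r ->
  cyl_eval r (set_coord om j w) =
  sumR (fun k => cyl_lin_drop r j k (om k)) (cyl_n r) + cyl_slice r j (cyl_vars r om) w.
Proof.
move=> [_ _ HB]; rewrite /cyl_eval /cyl_slice /cyl_lin_at.
rewrite (sumR_ext (g := fun k => if k == j then cyl_lin r j w else cyl_lin_drop r j k (om k)))
  => [|k _]; last first.
  rewrite /cyl_lin_drop; case: (eqVneq k j) => [->|ne]; first by rewrite set_coord_eq.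
  by rewrite set_coord_neq // => e; move: ne; rewrite e eqxx.
rewrite sumR_delta (sumR_ext (f := fun k => if k == j then 0 else _) (g := fun k => cyl_lin_drop r j k (om k)))
  => [|k _]; last by rewrite /cyl_lin_drop; case: (k == j).
rewrite Rplus_assoc; congr (_ + (_ + _)); apply: cblip_ext => // p.
rewrite /cyl_vars_set /cyl_vars; case: (eqVneq (cyl_coord r p) j) => [e|ne].
  by rewrite (set_coord_same om b w (esym e)).
by rewrite set_coord_neq // => e; move: ne; rewrite e eqxx.
Qed.

Lemma Hsp_cyl_lin_at r j : cyl_wf r -> Hsp (Sb j) (cyl_lin_at r j).
Proof. by move=> [Hz _ _]; rewrite /cyl_lin_at; case: (j < cyl_n r)%N => //; apply: Hsp_const. Qed.

Lemma Hsp_cyl_slice r j x : cyl_wf r -> Hsp (Sb j) (cyl_slice r j x).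
Proof.
move=> Hr; apply: Hsp_add; first exact: Hsp_cyl_lin_at.
case: Hr => [_ Hx HB]; apply: (Hsp_comp (Z := fun p w => cyl_vars_set r j x w p)) => // p.
rewrite /cyl_vars_set; case: (eqVneq (cyl_coord r p) j) => [e|_]; last exact: Hsp_const.
exact: (Hsp_set_coord b j _ _ (esym e) (Hx p)).
Qed.

Lemma Hsp_slice X j om : cylindrical X -> Hsp (Sb j) (fun w => X (set_coord om j w)).
Proof.
move=> [r [Hr E]]; apply: (Hsp_ext (Hsp_add (Hsp_const _ _) (Hsp_cyl_slice r j (cyl_vars r om) Hr))).
by move=> w; rewrite E cyl_eval_set_coord.
Qed.

Lemma cblip_Ex_cyl_slice r j : cyl_wf r -> cblip (fun x => Ex (Sb j) (cyl_slice r j x)).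
Proof.
move=> Hr; have [_ _ HB] := Hr; have [[MB HMB] _] := HB; have [L [_ HL]] := cblip_lipschitz HB.
have Hlin := Hsp_cyl_lin_at r j Hr.
apply: cblip_intro.
  exists (MB + Rabs (Ex (Sb j) (cyl_lin_at r j))) => x.
  have H : Rabs (Ex (Sb j) (cyl_slice r j x) - Ex (Sb j) (cyl_lin_at r j)) <= MB.
    apply: Ex_dist_le (Hsp_cyl_slice r j x Hr) Hlin _ => w.
    by rewrite /cyl_slice; have -> : forall a c, a + c - a = c by move=> *; ring.
  have -> : Ex (Sb j) (cyl_slice r j x) =
            (Ex (Sb j) (cyl_slice r j x) - Ex (Sb j) (cyl_lin_at r j)) + Ex (Sb j) (cyl_lin_at r j) by ring.
  by apply: Rle_trans (Rabs_triang _ _) _; apply: Rplus_le_compat_r.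
exists L => x y d Hd Hxy; apply: Ex_dist_le; try exact: Hsp_cyl_slice.
move=> w; rewrite /cyl_slice; have -> : forall a u v, a + u - (a + v) = u - v by move=> *; ring.
apply: HL => // p; rewrite /cyl_vars_set; case: (cyl_coord r p == j) => //.
by rewrite Rminus_diag Rabs_R0.
Qed.

Lemma cylindrical_Ex_at X j : cylindrical X -> cylindrical (Ex_at j X).
Proof.
move=> [r [Hr E]].
exists {| cyl_n := cyl_n r; cyl_lin := cyl_lin_drop r j; cyl_idx := cyl_idx r; cyl_coord := cyl_coord r;
          cyl_var := cyl_var r; cyl_fun := fun x => Ex (Sb j) (cyl_slice r j x) |}.
split.
  case: (Hr) => [Hz Hx HB]; split=> //= [k|]; last exact: cblip_Ex_cyl_slice.
  by rewrite /cyl_lin_drop; case: (k == j) => //; apply: Hsp_const.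
move=> om; rewrite /Ex_at /cyl_eval /= -Ex_add_const; last exact: Hsp_cyl_slice.
by apply: Ex_ext => w; rewrite E cyl_eval_set_coord.
Qed.

Lemma cylindrical_Ex_range a n X : cylindrical X -> cylindrical (Ex_range a n X).
Proof. by elim: n a => [|n IH] a H //=; apply: cylindrical_Ex_at; apply: IH. Qed.

Lemma Ex_range_mono a n X Y : cylindrical X -> cylindrical Y -> (forall om, X om <= Y om) ->
  forall om, Ex_range a n X om <= Ex_range a n Y om.
Proof.
elim: n a => [|n IH] a HX HY H om //=.
by apply: Ex_mono => [||w]; [apply: Hsp_slice; apply: cylindrical_Ex_range ..| apply: IH].
Qed.

Lemma Ex_range_subadd a n X Y : cylindrical X -> cylindrical Y ->
  forall om, Ex_range a n (fun om => X om + Y om) om <= Ex_range a n X om + Ex_range a n Y om.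
Proof.
elim: n a => [|n IH] a HX HY om /=; first exact: Rle_refl.
have HX' := cylindrical_Ex_range a.+1 n X HX; have HY' := cylindrical_Ex_range a.+1 n Y HY.
apply: Rle_trans (Ex_subadd (Hsp_slice _ a om HX') (Hsp_slice _ a om HY')).
apply: Ex_mono => [||w]; last exact: IH.
- by apply: (Hsp_slice _ a om); apply: cylindrical_Ex_range; apply: cylindrical_add.
- by apply: (Hsp_slice (fun om => _ + _) a om); apply: cylindrical_add.
Qed.

Lemma Ex_range_poshom a n l X : cylindrical X -> 0 <= l ->
  forall om, Ex_range a n (fun om => l * X om) om = l * Ex_range a n X om.
Proof.
elim: n a => [|n IH] a HX Hl om //=.
rewrite /Ex_at -Ex_poshom //; last by apply: Hsp_slice; apply: cylindrical_Ex_range.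
by apply: Ex_ext => w; apply: IH.
Qed.

(* Integrate out enough coordinates; by [Ex_range_supported] it does not matter how many. *)
Definition support_bound (X : prodOmega Sb -> R) : nat :=
  if excluded_middle_informative (exists K, supported_below K X) is left H
  then proj1_sig (constructive_indefinite_description _ H) else 0%N.

Definition prod_Ex (X : prodOmega Sb -> R) : R := Ex_range 0 (support_bound X) X b.

Lemma prod_Ex_eq K X : supported_below K X -> prod_Ex X = Ex_range 0 K X b.
Proof.
move=> H; rewrite /prod_Ex /support_bound.
case: excluded_middle_informative => [H'|[]]; last by exists K.
case: (constructive_indefinite_description _ H') => K' HK' /=.
rewrite -(Ex_range_supported HK' (leq_maxl K' K)).
by rewrite (Ex_range_supported H (leq_maxr K' K)).
Qed.

Lemma prod_Ex_common_bound X Y : cylindrical X -> cylindrical Y ->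
  exists K, [/\ supported_below K X, supported_below K Y & supported_below K (fun om => X om + Y om)].
Proof.
move=> HX HY; have [K1 H1] := cylindrical_supported X HX; have [K2 H2] := cylindrical_supported Y HY.
exists (maxn K1 K2).
have H1' := supported_below_le (leq_maxl K1 K2) H1; have H2' := supported_below_le (leq_maxr K1 K2) H2.
by split=> // om om' E; rewrite (H1' om om' E) (H2' om om' E).
Qed.

Lemma prod_Ex_mono X Y : cylindrical X -> cylindrical Y -> (forall om, X om <= Y om) ->
  prod_Ex X <= prod_Ex Y.
Proof.
move=> HX HY H; have [K [H1 H2 _]] := prod_Ex_common_bound X Y HX HY.
by rewrite (prod_Ex_eq K X H1) (prod_Ex_eq K Y H2); apply: Ex_range_mono.
Qed.

Lemma prod_Ex_const c : prod_Ex (fun _ => c) = c.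
Proof. by rewrite (prod_Ex_eq 0) // Ex_range_const. Qed.

Lemma prod_Ex_subadd X Y : cylindrical X -> cylindrical Y ->
  prod_Ex (fun om => X om + Y om) <= prod_Ex X + prod_Ex Y.
Proof.
move=> HX HY; have [K [H1 H2 H3]] := prod_Ex_common_bound X Y HX HY.
by rewrite (prod_Ex_eq K _ H1) (prod_Ex_eq K _ H2) (prod_Ex_eq K _ H3); apply: Ex_range_subadd.
Qed.

Lemma prod_Ex_poshom l X : cylindrical X -> 0 <= l -> prod_Ex (fun om => l * X om) = l * prod_Ex X.
Proof.
move=> HX Hl; have [K H] := cylindrical_supported X HX.
have H' : supported_below K (fun om => l * X om) by move=> om om' E; rewrite (H om om' E).
by rewrite (prod_Ex_eq K _ H) (prod_Ex_eq K _ H'); apply: Ex_range_poshom.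
Qed.

Definition ProdSLE : SLE :=
  {| Omega := prodOmega Sb; Hsp := cylindrical; Ex := prod_Ex;
     Hsp_add := cylindrical_add; Hsp_scal := cylindrical_scal; Hsp_lip := cylindrical_comp;
     Ex_mono := prod_Ex_mono; Ex_const := prod_Ex_const; Ex_subadd := prod_Ex_subadd;
     Ex_poshom := prod_Ex_poshom |}.

End CylinderFunctions.
Arguments cylindrical {Sb} X.

Lemma cylindrical_sumR (Sb : nat -> SLE) (f : nat -> prodOmega Sb -> R) n :
  (forall j, cylindrical (f j)) -> cylindrical (fun om => sumR (fun j => f j om) n).
Proof.
by move=> H; elim: n => [|n IH] /=; [apply: cylindrical_const | apply: cylindrical_add].
Qed.

Section ProductExpectation.
Variable Sb : nat -> SLE.
Variable b : prodOmega Sb.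
Local Notation PS := (ProdSLE Sb b).

Lemma prod_Ex_coord j (g : Omega (Sb j) -> R) : Ex PS (fun om => g (om j)) = Ex (Sb j) g.
Proof.
rewrite /= (prod_Ex_eq Sb b j.+1) => [|om om' E]; last by rewrite E.
rewrite -addn1 Ex_range_split add0n /=.
have -> : Ex_at j (fun om => g (om j)) = (fun _ => Ex (Sb j) g).
  by apply: functional_extensionality => om; apply: Ex_ext => w; rewrite set_coord_eq.
exact: Ex_range_const.
Qed.

Lemma prod_Ex_range a n X om :
  depends_on (fun i => (a <= i)%N /\ (i < a + n)%N) X -> Ex PS X = Ex_range a n X om.
Proof.
move=> H; rewrite /= (prod_Ex_eq Sb b (a + n) X) => [|om1 om2 E]; last first.
  by apply: H => i [_ Hi]; apply: E.
rewrite Ex_range_split add0n.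
have -> : Ex_range a n X = fun _ => Ex_range a n X om.
  by apply: functional_extensionality => om'; apply: Ex_range_const_pt.
exact: Ex_range_const.
Qed.

Lemma prod_Ex_split J m X :
  supported_below (J + (1 + m))%N X -> Ex PS X = Ex_range 0 J (Ex_at J (Ex_range J.+1 m X)) b.
Proof. by move=> H; rewrite /= (prod_Ex_eq Sb b _ X H) Ex_range_split add0n add1n. Qed.

Lemma prod_Ex_past_future J m (I D : finType) (phi : ((I + D)%type -> R) -> R)
  (x : prodOmega Sb -> I -> R) (y : prodOmega Sb -> D -> R) (W : D -> prodOmega Sb -> R) :
  (forall om om', (forall i, (i <= J)%N -> om i = om' i) -> x om = x om' /\ y om = y om') ->
  (forall q, depends_on (fun i => (J.+1 <= i)%N /\ (i < J.+1 + m)%N) (W q)) ->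
  Ex PS (fun om => phi (vcat (x om) (fun q => y om q + W q om))) =
  Ex_range 0 J (Ex_at J (fun om =>
    Ex PS (fun om' => phi (vcat (x om) (fun q => y om q + W q om'))))) b.
Proof.
move=> Hxy HW; rewrite (prod_Ex_split (J := J) (m := m)) => [|om om' E]; last first.
  have [-> ->] : x om = x om' /\ y om = y om' by apply: Hxy => i Hi; apply: E; lia.
  congr phi; congr vcat; apply: functional_extensionality => q.
  by congr (_ + _); apply: HW => i [_ Hi]; apply: E; lia.
congr (Ex_range 0 J (Ex_at J _) b).
apply: functional_extensionality => om.
have Hfreeze om' j w : (J < j)%N -> (x (set_coord om' j w), y (set_coord om' j w)) = (x om', y om').
  move=> Hj; have [-> ->] // : x (set_coord om' j w) = x om' /\ y (set_coord om' j w) = y om'.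
  by apply: Hxy => i Hi; rewrite set_coord_neq //; lia.
rewrite (@Ex_range_freeze Sb _ J.+1 m (fun c om' => phi (vcat c.1 (fun q => c.2 q + W q om')))
                         (fun om => (x om, y om))) => [|om' j w Hj _]; last exact: Hfreeze.
rewrite (prod_Ex_range (a := J.+1) (n := m) om) // => om1 om2 E; congr phi; congr vcat.
by apply: functional_extensionality => q; congr (_ + _); apply: HW.
Qed.

(* The future [W] is integrated out first; in the coordinate [J] the past [A] is then
   frozen and the independence of [Q] and [Rr] applies. *)
Lemma prod_indep (J m : nat) (I D : finType)
  (A : I -> prodOmega Sb -> R) (Q : I -> Omega (Sb J) -> R)
  (Rr : D -> Omega (Sb J) -> R) (W : D -> prodOmega Sb -> R) :
  (forall p, supported_below J (A p)) ->
  (forall q, depends_on (fun i => (J.+1 <= i)%N /\ (i < J.+1 + m)%N) (W q)) ->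
  (forall q, cylindrical (W q)) ->
  indep Q Rr ->
  @indep PS I D (fun p om => A p om + Q p (om J)) (fun q om => Rr q (om J) + W q om).
Proof.
move=> HA HW HWc HQR phi Hphi.
pose Psi (x : I -> R) (y : D -> R) := Ex PS (fun om' => phi (vcat x (fun q => y q + W q om'))).
pose Gam x := Ex (Sb J) (fun w => Psi x (fun q => Rr q w)).
have HA_past om om' : (forall i, (i <= J)%N -> om i = om' i) ->
    (fun p => A p om + Q p (om J)) = (fun p => A p om' + Q p (om' J)).
  move=> E; apply: functional_extensionality => p.
  by rewrite (HA p om om') => [|i Hi]; [rewrite E | apply: E; lia].
have HA_set om w p : A p (set_coord om J w) = A p om.
  by apply: HA => i Hi; rewrite set_coord_neq //; lia.
have Hinner x : Ex PS (fun om => phi (vcat x (fun q => Rr q (om J) + W q om))) = Gam x.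
  rewrite (@prod_Ex_past_future J m I D phi (fun _ => x) (fun om q => Rr q (om J)) W) //; last first.
    by move=> om om' E; rewrite E.
  have -> : Ex_at J (fun om => Psi x (fun q => Rr q (om J))) = fun _ => Gam x.
    by apply: functional_extensionality => om; apply: Ex_ext => w; rewrite set_coord_eq.
  exact: Ex_range_const.
rewrite (@prod_Ex_past_future J m I D phi (fun om p => A p om + Q p (om J)) (fun om q => Rr q (om J)) W)
  // => [|om om' E]; last first.
  by rewrite (HA_past om om') // E.
rewrite (@Ex_ext PS _ (fun om => Gam (fun p => A p om + Q p (om J)))) => [|om]; last exact: Hinner.
rewrite (prod_Ex_split (J := J) (m := 0)) => [|om om' E]; last first.
  by rewrite (HA_past om om') // => i Hi; apply: E; lia.
congr (Ex_range 0 J _ b); apply: functional_extensionality => om0; rewrite /Ex_at.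
rewrite (Ex_ext (Y := fun w => Psi (fun p => A p om0 + Q p w) (fun q => Rr q w))) => [|w];
  last by rewrite /= set_coord_eq; congr Psi; apply: functional_extensionality => p; rewrite HA_set.
rewrite [RHS](Ex_ext (Y := fun w => Gam (fun p => A p om0 + Q p w))) => [|w];
  last by rewrite /= set_coord_eq; congr Gam; apply: functional_extensionality => p; rewrite HA_set.
pose psi (z : (((I + D) + D)%type -> R)) :=
  phi (vcat (fun p => A p om0 + z (inl (inl p))) (fun q => z (inl (inr q)) + z (inr q))).
have Hpsi : cblip psi.
  apply: cblip_comp => // [[p|q]] /=.
  - by apply: lipschitz_add; [apply: lipschitz_const | apply: lipschitz_proj].
  - by apply: lipschitz_add; apply: lipschitz_proj.
exact: HQR _ (cblip_Ex_vcat (S := PS) Hpsi HWc).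
Qed.

End ProductExpectation.

(** * Gluing the pieces together *)

Definition clamp (x : R) := Rmin 1 (Rmax 0 x).

Lemma clamp_le0 x : x <= 0 -> clamp x = 0.
Proof. by rewrite /clamp /Rmin /Rmax => H; repeat case: Rle_dec; lra. Qed.

Lemma clamp_ge1 x : 1 <= x -> clamp x = 1.
Proof. by rewrite /clamp /Rmin /Rmax => H; repeat case: Rle_dec; lra. Qed.

Lemma clamp_id x : 0 <= x <= 1 -> clamp x = x.
Proof. by rewrite /clamp /Rmin /Rmax => H; repeat case: Rle_dec; lra. Qed.

Lemma clamp_in x : 0 <= clamp x <= 1.
Proof. by rewrite /clamp /Rmin /Rmax; repeat case: Rle_dec; lra. Qed.

Lemma clamp_le x y : 0 <= y -> x <= y -> clamp x <= y.
Proof. by rewrite /clamp /Rmin /Rmax => H1 H2; repeat case: Rle_dec; lra. Qed.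

Lemma clamp_gt x y : 0 <= x -> x < 1 -> x < y -> x < clamp y.
Proof. by rewrite /clamp /Rmin /Rmax => H1 H2 H3; repeat case: Rle_dec; lra. Qed.

Lemma INR_addn m n : INR (m + n)%N = INR m + INR n.
Proof. by rewrite -plusE plus_INR. Qed.

Lemma INR_leq m n : (m <= n)%N -> INR m <= INR n.
Proof. by move/leP; apply: le_INR. Qed.

Lemma INR_ltn m n : INR m < INR n -> (m < n)%N.
Proof. by move/INR_lt/ltP. Qed.

Lemma nat_floor u : 0 <= u -> exists J : nat, INR J <= u < INR J + 1.
Proof.
move=> Hu; have [n Hn] := INR_unbounded u.
elim: n Hn => [|n IH] Hn; first by rewrite /= in Hn; lra.
case: (Rlt_le_dec u (INR n)) => H; first exact: IH.
by exists n; rewrite S_INR in Hn; lra.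
Qed.

Definition nat_above (t : R) : nat :=
  proj1_sig (constructive_indefinite_description _ (INR_unbounded t)).

Lemma nat_above_gt t : t < INR (nat_above t).
Proof. by rewrite /nat_above; case: constructive_indefinite_description => n /=; lra. Qed.

Definition reindex (S : SLE) (D D' : finType) (Z : process S D) (m : D' -> D) : process S D' :=
  fun t k w => Z t (m k) w.

Lemma indep_incr_reindex (T : R -> Prop) (S : SLE) (D D' : finType) (Z : process S D) (m : D' -> D) :
  indep_incr T Z -> indep_incr T (reindex Z m).
Proof.
move=> [HP [H0 HI]]; split; first by move=> t Ht k; apply: HP.
split=> [k w|k s v Hs Hv Hinc Hlt]; first exact: H0.
apply: (indep_comp (g := fun p z => z (p.1, m p.2)) (h := fun q z => z (m q))
                   (HI k s v Hs Hv Hinc Hlt)) => //.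
- by move=> p; apply: (lipschitz_proj (p.1, m p.2)).
- by move=> q; apply: lipschitz_proj.
Qed.

Section Glue.
Local Unset Implicit Arguments.
Variables (D : finType) (Sbar : nat -> SLE) (XY : forall i : nat, process (Sbar i) D).
Hypothesis HXY : forall i, indep_incr Tunit (XY i).
Variable b : prodOmega Sbar.
Local Notation PS := (ProdSLE Sbar b).

Definition piece (t : R) (j : nat) (k : D) (om : prodOmega Sbar) : R :=
  XY j (clamp (t - INR j)) k (om j).

(* The [j]-th piece runs on the time window [[j, j + 1]] and is frozen at its final
   value afterwards, so that [glue t] is the sum of the increments over the windows up to [t]. *)
Definition glue : process PS D :=
  fun t k om => sumR (fun j => piece t j k om) (nat_above t).

Lemma piece_zero t j k om : t <= INR j -> piece t j k om = 0.
Proof. by move=> H; rewrite /piece clamp_le0; [case: (HXY j) => [_ []] | lra]. Qed.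

Lemma glue_sumR t K k om : t <= INR K -> glue t k om = sumR (fun j => piece t j k om) K.
Proof.
move=> HK; have Ht := nat_above_gt t.
rewrite /glue -(@sumR_tail _ (nat_above t) (maxn (nat_above t) K)) ?leq_maxl // => [|j Hj _].
  rewrite (@sumR_tail _ K (maxn (nat_above t) K)) ?leq_maxr // => j Hj _.
  by apply: piece_zero; apply: Rle_trans HK (INR_leq Hj).
by apply: piece_zero; apply: Rlt_le; apply: Rlt_le_trans Ht (INR_leq Hj).
Qed.

Lemma glue0 k om : glue 0 k om = 0.
Proof. by rewrite (@glue_sumR 0 0) //=; apply: Rle_refl. Qed.

Lemma cylindrical_piece t j k : cylindrical (piece t j k).
Proof.
apply: (cylindrical_coord Sbar b j (fun w => XY j (clamp (t - INR j)) k w)).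
by case: (HXY j) => [HP _]; apply: HP; apply: clamp_in.
Qed.

Lemma glue_proc : is_process Tpos glue.
Proof. by move=> t _ k; apply: cylindrical_sumR => j; apply: cylindrical_piece. Qed.

Lemma glue_window t j k om : INR j <= t <= INR j + 1 ->
  glue t k om = sumR (fun i => XY i 1 k (om i)) j + XY j (t - INR j) k (om j).
Proof.
move=> Ht; rewrite (glue_sumR t j.+1); last by rewrite S_INR; lra.
rewrite /= /piece clamp_id; last lra.
congr (_ + _); apply: sumR_ext => i Hi; rewrite clamp_ge1 //.
by have := INR_leq Hi; rewrite S_INR; lra.
Qed.

Lemma glue_incr_split J m u v q om :
  INR J <= u < INR J + 1 -> u < v -> v <= INR (J + (1 + m)) ->
  glue v q om - glue u q om =
  (XY J (clamp (v - INR J)) q (om J) - XY J (u - INR J) q (om J)) +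
  sumR (fun j => piece v (J.+1 + j) q om) m.
Proof.
move=> Hu Huv Hv.
rewrite (glue_sumR v (J + (1 + m))) // (glue_sumR u (J + (1 + m))); last lra.
rewrite !sumR_split.
rewrite (@sumR_zero (fun j => piece u (J + (1 + j)) q om)) => [|j _]; last first.
  by apply: piece_zero; rewrite !INR_addn; have := pos_INR j; rewrite /=; lra.
rewrite (@sumR_ext (fun j => piece v (J + (1 + j)) q om) (fun j => piece v (J.+1 + j) q om))
  => [|j _]; last by rewrite addnA addn1.
rewrite (@sumR_ext (fun j => piece v j q om) (fun j => piece u j q om)) => [|j Hj]; last first.
  by rewrite /piece !clamp_ge1 //; have := INR_leq Hj; rewrite S_INR; lra.
by rewrite /= /piece addn0 (@clamp_id (u - INR J)); [ring | lra].
Qed.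

Lemma glue_indep k (s : 'I_k.+1 -> R) v :
  (forall i, Tpos (s i)) -> strictly_increasing s -> s ord_max < v ->
  indep (fdvec glue s) (incr glue (s ord_max) v).
Proof.
move=> Hs Hinc Huv; set u := s ord_max in Huv *.
have Hsu i : s i <= u by apply: (strictly_increasing_le Hinc); rewrite -ltnS.
have [J HJ] : exists J : nat, INR J <= u < INR J + 1 := nat_floor (Hs ord_max).
have [K HvK] := INR_unbounded v.
have HJK : (J < K)%N by apply: INR_ltn; lra.
pose m := (K - J.+1)%N.
have HK : K = (J + (1 + m))%N by rewrite /m; lia.
(* [J] is the window containing [u].  The past consists of the pieces below [J] and of
   the piece [J] up to time [u - J]; the increment, of the piece [J] after [u - J] and of
   the later pieces [W]. *)
pose t i := clamp (s i - INR J).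
have Hpast : indep (fdvec (XY J) t) (incr (XY J) (u - INR J) (clamp (v - INR J))).
  apply: (indep_past_incr (HXY J)) => [i|i|||]; rewrite /t /Tunit; try apply: clamp_in.
  - by apply: clamp_le; have := Hsu i; lra.
  - lra.
  - by apply: clamp_gt; lra.
pose A p om := sumR (fun j => piece (s p.1) j p.2 om) J.
pose W q om := sumR (fun j => piece v (J.+1 + j) q om) m.
have HA p : supported_below J (A p).
  by move=> om om' E; apply: sumR_ext => j Hj; rewrite /piece E.
have HW q : depends_on (fun i => (J.+1 <= i)%N /\ (i < J.+1 + m)%N) (W q).
  by move=> om om' E; apply: sumR_ext => j Hj; rewrite /piece E //; lia.
have HWc q : cylindrical (W q).
  by apply: cylindrical_sumR => j; apply: cylindrical_piece.
have Hind := @prod_indep Sbar b J m _ _ A _ _ W HA HW HWc Hpast.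
apply: (indep_comp (g := fun p z => z p) (h := fun q z => z q) Hind).
- by move=> p; apply: lipschitz_proj.
- by move=> q; apply: lipschitz_proj.
- move=> [i q] om; rewrite /fdvec (glue_sumR _ J.+1) //.
  by rewrite S_INR /=; have := Hsu i; lra.
- by move=> q om; rewrite /incr (glue_incr_split J m) -?HK //; lra.
Qed.

Lemma glue_indep_incr : indep_incr Tpos glue.
Proof.
split; [exact: glue_proc | split => [k om|k s v Hs _ Hinc Huv]]; first exact: glue0.
exact: glue_indep.
Qed.

Lemma glue_window_ident (S : SLE) (D' : finType) (M : process S D') (m : D' -> D) :
  (forall i : nat, ident_proc Tunit (reindex (XY i) m) (shift_incr M (INR i))) ->
  forall j u v, INR j <= u -> u < v -> v <= INR j + 1 ->
  ident_vec (incr (reindex glue m) u v) (incr M u v).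
Proof.
move=> Hid j u v H1 H2 H3 phi Hphi.
pose Y k w := XY j (v - INR j) (m k) w - XY j (u - INR j) (m k) w.
rewrite (@Ex_ext PS _ (fun om => phi (fun k => Y k (om j)))) => [|om]; last first.
  congr phi; apply: functional_extensionality => k.
  by rewrite /incr /reindex /Y !(glue_window _ j) //; [ring | lra | lra].
rewrite (prod_Ex_coord b (fun w : Omega (Sbar j) => phi (fun k => Y k w))).
pose t2 (i : 'I_2) := if nat_of_ord i == 0%N then u - INR j else v - INR j.
have Ht2 i : Tunit (t2 i) by rewrite /t2 /Tunit; case: (_ == _); lra.
apply: (ident_vec_comp (g := fun k z => z (ord_max, k) - z (ord0, k)) (Hid j 2%N t2 Ht2)) => //.
- by move=> k; apply: lipschitz_sub; apply: lipschitz_proj.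
- by move=> k w; rewrite /incr /fdvec /shift_incr /t2 /=; rewrite !Rplus_minus; ring.
Qed.

End Glue.

Lemma ident_proc_glue (D D' : finType) (Sbar : nat -> SLE) (XY : forall i : nat, process (Sbar i) D)
  (HXY : forall i, indep_incr Tunit (XY i)) (b : prodOmega Sbar) (S : SLE) (M : process S D')
  (m : D' -> D) :
  indep_incr Tpos M ->
  (forall i : nat, ident_proc Tunit (reindex (XY i) m) (shift_incr M (INR i))) ->
  ident_proc Tpos (reindex (glue D Sbar XY b) m) M.
Proof.
move=> HM Hid; have HG := indep_incr_reindex m (glue_indep_incr D Sbar XY HXY b).
apply: (ident_proc_of_incr HG HM); apply: (ident_incr_of_windows HG HM).
exact: glue_window_ident.
Qed.

Local Close Scope R_scope.
Unset Implicit Arguments.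
Theorem mainTheorem2 (d : nat) (S1 S2 : SLE)
  (M : process S1 'I_d) (N : process S2 'I_d)
  (Sbar : nat -> SLE) (XY : forall i : nat, process (Sbar i) 'I_(d + d)) :
  indep_incr Tpos M -> indep_incr Tpos N ->
  (forall i : nat, indep_incr Tunit (XY i)) ->
  (forall i : nat, ident_proc Tunit (lpart (XY i)) (shift_incr M (INR i))) ->
  (forall i : nat, ident_proc Tunit (rpart (XY i)) (shift_incr N (INR i))) ->
  exists (S : SLE) (MN : process S 'I_(d + d)),
    indep_incr Tpos MN /\
    ident_proc Tpos (lpart MN) M /\
    ident_proc Tpos (rpart MN) N.
Proof.
move=> HM HN HXY HL HR.
pose b : prodOmega Sbar :=
  fun i => proj1_sig (constructive_indefinite_description _ (Omega_inhabited (Sbar i))).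
exists (ProdSLE Sbar b), (glue _ Sbar XY b).
split; first exact: glue_indep_incr.
by split; apply: ident_proc_glue.
Qed.
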